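(* Let $G$ be a hereditarily normal topological group and let $S,T\subseteq G$ be compact subspaces. Suppose $S$ is separable, $s\in S$ is a limit (non-isolated) point of $S$, and $t\in T$ has uncountable character in $T$. Then there exists a compact set $C\subseteq T$ with $t\in C$ such that $t$ has uncountable character in $C$ and $sC\subseteq St$, where $sC=\{sc: c\in C\}$ and $St=\{xt : x\in S\}$.
   Context: All spaces are assumed to be $T_1$. The group operation is written multiplicatively. The character of a point $t$ in a space $Y$ is the minimal cardinality of a local base at $t$ in $Y$. *)

From Stdlib Require Import List Classical.

Set Implicit Arguments.

Record TopGroup := {
  carrier :> Type;
  mul : carrier -> carrier -> carrier;
  inv : carrier -> carrier;
  one : carrier;
  mulA : forall x y z, mul x (mul y z) = mul (mul x y) z;
  mul1g : forall x, mul one x = x;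
  mulg1 : forall x, mul x one = x;
  mulVg : forall x, mul (inv x) x = one;
  mulgV : forall x, mul x (inv x) = one;
  is_open : (carrier -> Prop) -> Prop;
  open_full : is_open (fun _ => True);
  open_inter : forall U V, is_open U -> is_open V ->
      is_open (fun x => U x /\ V x);
  open_union : forall F : (carrier -> Prop) -> Prop,
      (forall U, F U -> is_open U) -> is_open (fun x => exists U, F U /\ U x);
  mul_cont : forall W x y, is_open W -> W (mul x y) ->
      exists U V, is_open U /\ is_open V /\ U x /\ V y /\
        (forall a b, U a -> V b -> W (mul a b));
  inv_cont : forall W, is_open W -> is_open (fun x => W (inv x))
}.

Section Topo.
Context {G : TopGroup}.

Definition is_closed (F : G -> Prop) : Prop := is_open G (fun x => ~ F x).

(* T1: all spaces are T1 (standing assumption). *)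
Definition T1 : Prop :=
  forall x y : G, x <> y -> exists U, is_open G U /\ U x /\ ~ U y.

(* Y (a subspace) is normal: disjoint relatively closed subsets of Y
   have disjoint relatively open neighbourhoods in Y. *)
Definition normal_subspace (Y : G -> Prop) : Prop :=
  forall FA FB : G -> Prop, is_closed FA -> is_closed FB ->
    (forall x, Y x -> FA x -> FB x -> False) ->
    exists U V, is_open G U /\ is_open G V /\
      (forall x, Y x -> FA x -> U x) /\ (forall x, Y x -> FB x -> V x) /\
      (forall x, Y x -> U x -> V x -> False).

Definition hereditarily_normal : Prop :=
  forall Y : G -> Prop, normal_subspace Y.

Definition compact (S : G -> Prop) : Prop :=
  forall F : (G -> Prop) -> Prop, (forall U, F U -> is_open G U) ->
    (forall x, S x -> exists U, F U /\ U x) ->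
    exists l : list (G -> Prop), (forall U, In U l -> F U) /\
      (forall x, S x -> exists U, In U l /\ U x).

(* S is separable: it has a countable dense subset (enumerated with
   possible gaps, so that the empty/finite case is included). *)
Definition separable (S : G -> Prop) : Prop :=
  exists d : nat -> option G,
    (forall n x, d n = Some x -> S x) /\
    (forall U, is_open G U -> (exists x, S x /\ U x) ->
       exists n x, d n = Some x /\ U x).

Definition limit_point (S : G -> Prop) (s : G) : Prop :=
  S s /\ forall U, is_open G U -> U s -> exists x, S x /\ U x /\ x <> s.

(* t has countable character in the subspace T: there is a countable local
   base at t in T.  Relatively open sets V n /\ T are represented by open
   sets V n of G. *)
Definition countable_character (T : G -> Prop) (t : G) : Prop :=
  exists V : nat -> (G -> Prop),
    (forall n, is_open G (V n) /\ V n t) /\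
    (forall U, is_open G U -> U t ->
       exists n, forall x, T x -> V n x -> U x).

Definition uncountable_character (T : G -> Prop) (t : G) : Prop :=
  T t /\ ~ countable_character T t.

End Topo.

From Stdlib Require Import List Classical.
From Stdlib Require Import FunctionalExtensionality PropExtensionality IndefiniteDescription Lia.

(* Put p := s t and
     C := { c in T | s c in S t },
   a closed, hence compact, subset of T containing t with s C included in S t.
   Suppose t had a countable local base (V n) in C.  Regularity of the group
   gives open R n containing t whose closures lie inside V n; the compact set
     Z := T minus the union of the complements of these closures
   meets C only in t.  So S t and s Z are closed sets meeting only in p, and
   hereditary normality (applied to G minus p) separates them off p by
   open U0 and V0.  Translating by the countable dense set of S, we obtain
   countably many open O n containing t with x_n O n inside U0 minus p.  The
   sets R n and O n then isolate t in T: if z <> t lay in all of them, s z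
   would be in V0, and a dense point x_n <> s close to s would put x_n z in
   both U0 and V0.  Finally, in a compact subspace of a regular T1 space,
   countable pseudocharacter implies countable character, contradicting the
   hypothesis on t. *)

Section TopGroupFacts.
Context {G : TopGroup}.

Lemma open_ext (P Q : G -> Prop) :
  (forall x, P x <-> Q x) -> is_open G P -> is_open G Q.
Proof.
  intros HPQ HP.
  assert (E : P = Q).
  { apply functional_extensionality; intro x.
    apply propositional_extensionality; apply HPQ. }
  rewrite <- E; exact HP.
Qed.

Lemma open_local (P : G -> Prop) :
  (forall x, P x -> exists U, is_open G U /\ U x /\ forall y, U y -> P y) ->
  is_open G P.
Proof.
  intros Hloc.
  apply (open_ext (fun x => exists U,
           (fun U => is_open G U /\ forall y, U y -> P y) U /\ U x)).
  - intro x; split.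
    + intros [U [[_ HUP] Ux]]; auto.
    + intro Px. destruct (Hloc x Px) as [U [HU [Ux HUP]]]. exists U; auto.
  - apply open_union. intros U [HU _]; exact HU.
Qed.

Lemma open_seq_union (Q : nat -> G -> Prop) :
  (forall n, is_open G (Q n)) -> is_open G (fun x => exists n, Q n x).
Proof.
  intros HQ. apply open_local. intros x [n Qx].
  exists (Q n). split; [apply HQ|split; [exact Qx|]]. intros y Qy; exists n; exact Qy.
Qed.

Lemma open_finite_inter (R : nat -> G -> Prop) (m : nat) :
  (forall n, is_open G (R n)) -> is_open G (fun y => forall k, k <= m -> R k y).
Proof.
  intros HR. induction m as [|m IH].
  - apply (open_ext (R 0)); [|apply HR].
    intro y; split; [intros Ry k Hk; replace k with 0 by lia; exact Ry|].
    intro H; apply H; lia.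
  - apply (open_ext (fun y => (forall k, k <= m -> R k y) /\ R (S m) y));
      [|apply open_inter; auto].
    intro y; split.
    + intros [Hm HSm] k Hk.
      destruct (PeanoNat.Nat.eq_dec k (S m)) as [->|Hne]; [exact HSm|apply Hm; lia].
    + intros H; split; [intros k Hk; apply H; lia|apply H; lia].
Qed.

Lemma open_minus (HT1 : @T1 G) (U : G -> Prop) (p : G) :
  is_open G U -> is_open G (fun x => U x /\ x <> p).
Proof.
  intros HU. apply open_local. intros x [Ux Hxp].
  destruct (HT1 x p Hxp) as [W [HW [Wx Wp]]].
  exists (fun y => U y /\ W y). split; [apply open_inter; auto|split; [auto|]].
  intros y [Uy Wy]. split; [exact Uy|]. intros ->; contradiction.
Qed.

Lemma mul_cancel_l (a b c : G) : mul G a b = mul G a c -> b = c.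
Proof.
  intros H. rewrite <- (mul1g G b), <- (mul1g G c), <- (mulVg G a), <- !mulA, H.
  reflexivity.
Qed.

Lemma mul_cancel_r (a b c : G) : mul G b a = mul G c a -> b = c.
Proof.
  intros H. rewrite <- (mulg1 G b), <- (mulg1 G c), <- (mulgV G a), !mulA, H.
  reflexivity.
Qed.

Definition cont (f : G -> G) : Prop :=
  forall W x, is_open G W -> W (f x) ->
    exists U, is_open G U /\ U x /\ forall y, U y -> W (f y).

Lemma cont_lmul (a : G) : cont (fun y => mul G a y).
Proof.
  intros W x HW Wax.
  destruct (mul_cont G W a x HW Wax) as [U [V [_ [HV [Ua [Vx HUV]]]]]].
  exists V. split; [exact HV|split; [exact Vx|]]. intros y Vy; apply HUV; auto.
Qed.

Lemma cont_rmul (a : G) : cont (fun y => mul G y a).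
Proof.
  intros W x HW Wxa.
  destruct (mul_cont G W x a HW Wxa) as [U [V [HU [_ [Ux [Va HUV]]]]]].
  exists U. split; [exact HU|split; [exact Ux|]]. intros y Uy; apply HUV; auto.
Qed.

Lemma cont_preimage (f : G -> G) (W : G -> Prop) :
  cont f -> is_open G W -> is_open G (fun y => W (f y)).
Proof.
  intros Hf HW. apply open_local. intros x Wfx.
  destruct (Hf W x HW Wfx) as [U [HU [Ux HUW]]]. exists U; auto.
Qed.

(* If the product set
   U V lies inside O, with x in U and 1 in V, then R := U and
   Q := (complement of O) V^-1 work. *)
Lemma regular (x : G) (O : G -> Prop) : is_open G O -> O x ->
  exists R Q, is_open G R /\ is_open G Q /\ R x /\ (forall y, ~ O y -> Q y) /\
    (forall y, R y -> Q y -> False).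
Proof.
  intros HO Ox. rewrite <- (mulg1 G x) in Ox.
  destruct (mul_cont G O x (one G) HO Ox) as [U [V [HU [HV [Ux [V1 HUV]]]]]].
  exists U, (fun y => exists z, ~ O z /\ V (mul G (inv G y) z)).
  split; [exact HU|split; [|split; [exact Ux|split]]].
  - apply open_local. intros y [z [Oz Vz]].
    exists (fun y => V (mul G (inv G y) z)). split.
    + apply (inv_cont G (fun w => V (mul G w z))).
      apply cont_preimage; [apply cont_rmul|exact HV].
    + split; [exact Vz|]. intros y' Vy'; exists z; auto.
  - intros y Oy. exists y. split; [exact Oy|]. rewrite mulVg. exact V1.
  - intros y Uy [z [Oz Vz]]. apply Oz. specialize (HUV _ _ Uy Vz).
    rewrite mulA, mulgV, mul1g in HUV. exact HUV.
Qed.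

Lemma regular_seq (x : G) (P : nat -> G -> Prop) :
  (forall n, is_open G (P n) /\ P n x) ->
  exists R Q : nat -> G -> Prop,
    (forall n, is_open G (R n)) /\ (forall n, is_open G (Q n)) /\
    (forall n, R n x) /\ (forall n y, ~ P n y -> Q n y) /\
    (forall n y, R n y -> Q n y -> False).
Proof.
  intros HP.
  assert (Hex : forall n, exists RQ : (G -> Prop) * (G -> Prop),
    is_open G (fst RQ) /\ is_open G (snd RQ) /\ fst RQ x /\
    (forall y, ~ P n y -> snd RQ y) /\ (forall y, fst RQ y -> snd RQ y -> False)).
  { intro n. destruct (HP n) as [HPn Pnx].
    destruct (regular x (P n) HPn Pnx) as [R [Q HRQ]]. exists (R, Q); exact HRQ. }
  destruct (functional_choice _ Hex) as [f Hf].
  exists (fun n => fst (f n)), (fun n => snd (f n)).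
  repeat split; intro n; destruct (Hf n) as [HR [HQ [Rx [HQc Hd]]]]; auto.
Qed.

Lemma hausdorff (HT1 : @T1 G) (x y : G) : x <> y ->
  exists R Q, is_open G R /\ is_open G Q /\ R x /\ Q y /\
    (forall z, R z -> Q z -> False).
Proof.
  intros Hxy.
  destruct (regular x (fun z => True /\ z <> y)) as [R [Q [HR [HQ [Rx [HQc Hd]]]]]].
  - apply open_minus; [exact HT1|apply open_full].
  - auto.
  - exists R, Q. repeat split; auto. apply HQc. intros [_ H]; auto.
Qed.

Lemma separate_finitely_many (x : G) (F : (G -> Prop) -> Prop) (l : list (G -> Prop)) :
  (forall Q, In Q l -> F Q) ->
  (forall Q, F Q -> exists R, is_open G R /\ R x /\ forall y, R y -> Q y -> False) ->
  exists R, is_open G R /\ R x /\ forall Q, In Q l -> forall y, R y -> Q y -> False.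
Proof.
  intros Hl HF. induction l as [|Q1 l IH].
  - exists (fun _ => True). split; [apply open_full|split; [auto|intros Q []]].
  - destruct IH as [R1 [HR1 [R1x H1]]]; [intros Q HQ; apply Hl; right; exact HQ|].
    destruct (HF Q1 (Hl Q1 (or_introl eq_refl))) as [R2 [HR2 [R2x H2]]].
    exists (fun y => R1 y /\ R2 y). split; [apply open_inter; auto|split; auto].
    intros Q [<-|HQ] y [Ry1 Ry2]; eauto.
Qed.

Lemma compact_closed (HT1 : @T1 G) (K : G -> Prop) : compact K -> is_closed K.
Proof.
  intros HK. unfold is_closed. apply open_local. intros x Kx.
  destruct (HK (fun Q => is_open G Q /\ exists R, is_open G R /\ R x /\
     forall y, R y -> Q y -> False)) as [l [Hl Hcov]].
  - intros U [HU _]; exact HU.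
  - intros k Kk. assert (Hxk : x <> k) by (intros ->; contradiction).
    destruct (hausdorff HT1 x k Hxk) as [R [Q [HR [HQ [Rx [Qk Hd]]]]]].
    exists Q. split; [split; [exact HQ|exists R; auto]|exact Qk].
  - destruct (separate_finitely_many x _ l Hl) as [R [HR [Rx HRd]]].
    + intros Q [_ HQ]; exact HQ.
    + exists R. split; [exact HR|split; [exact Rx|]]. intros y Ry Ky.
      destruct (Hcov y Ky) as [U [HUl Uy]]. eapply HRd; eauto.
Qed.

Lemma filter_list (P : (G -> Prop) -> Prop) (l : list (G -> Prop)) :
  exists l', forall U, In U l' <-> In U l /\ P U.
Proof.
  induction l as [|V l [l' IH]].
  - exists nil. intro U; simpl; tauto.
  - destruct (classic (P V)) as [PV|nPV].
    + exists (V :: l'). intro U; simpl. rewrite IH.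
      split; [intros [<-|H]; tauto|intros [[<-|H] PU]; tauto].
    + exists l'. intro U; simpl. rewrite IH.
      split; [tauto|intros [[<-|H] PU]; tauto].
Qed.

Lemma compact_inter (K F : G -> Prop) : compact K -> is_closed F ->
  compact (fun x => K x /\ F x).
Proof.
  intros HK HF Fm Hop Hcov.
  destruct (HK (fun U => Fm U \/ U = (fun x => ~ F x))) as [l [Hl Hc]].
  - intros U [HU| ->]; [auto|exact HF].
  - intros x Kx. destruct (classic (F x)) as [Fx|nFx].
    + destruct (Hcov x (conj Kx Fx)) as [U [HU Ux]]. exists U; auto.
    + exists (fun x => ~ F x). auto.
  - destruct (filter_list Fm l) as [l' Hl'].
    exists l'. split.
    + intros U HU. apply Hl' in HU. tauto.
    + intros x [Kx Fx]. destruct (Hc x Kx) as [U [HUl Ux]].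
      exists U. split; [|exact Ux]. apply Hl'. split; [exact HUl|].
      destruct (Hl U HUl) as [HU| ->]; [exact HU|contradiction].
Qed.

Lemma list_choose (A B : Type) (P : B -> Prop) (R : A -> B -> Prop) (l : list A) :
  (forall a, In a l -> exists b, P b /\ R a b) ->
  exists l' : list B, (forall b, In b l' -> P b) /\
    forall a, In a l -> exists b, In b l' /\ R a b.
Proof.
  induction l as [|a l IH]; intros H.
  - exists nil. split; [intros b []|intros a []].
  - destruct IH as [l' [H1 H2]]; [intros a' Ha'; apply H; right; exact Ha'|].
    destruct (H a (or_introl eq_refl)) as [b [Pb Rab]].
    exists (b :: l'). split.
    + intros b' [<-|Hb']; auto.
    + intros a' [<-|Ha']; [exists b; simpl; auto|].
      destruct (H2 a' Ha') as [b' [Hb' R']]. exists b'; simpl; auto.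
Qed.

Lemma compact_image (f : G -> G) (K : G -> Prop) : cont f -> compact K ->
  compact (fun y => exists x, K x /\ y = f x).
Proof.
  intros Hf HK Fm Hop Hcov.
  destruct (HK (fun U => is_open G U /\ exists W, Fm W /\ forall y, U y -> W (f y)))
    as [l [Hl Hc]].
  - intros U [HU _]; exact HU.
  - intros x Kx. destruct (Hcov (f x) (ex_intro _ x (conj Kx eq_refl))) as [W [FW Wfx]].
    destruct (Hf W x (Hop W FW) Wfx) as [U [HU [Ux HUW]]].
    exists U. split; [split; [exact HU|exists W; auto]|exact Ux].
  - destruct (list_choose _ _ Fm (fun U W => forall y, U y -> W (f y)) l) as [l' [H1 H2]].
    + intros U HU. destruct (Hl U HU) as [_ H]; exact H.
    + exists l'. split; [exact H1|]. intros y [x [Kx ->]].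
      destruct (Hc x Kx) as [U [HUl Ux]]. destruct (H2 U HUl) as [W [HW HUW]].
      exists W; auto.
Qed.

Lemma increasing_cover_bound (K U : G -> Prop) (W : nat -> G -> Prop) :
  compact K -> is_open G U -> (forall m, is_open G (W m)) ->
  (forall m m' y, m <= m' -> W m y -> W m' y) ->
  (forall x, K x -> U x \/ exists m, W m x) ->
  exists m, forall x, K x -> U x \/ W m x.
Proof.
  intros HK HU HW Hmono Hcov.
  destruct (HK (fun V => V = U \/ exists m, V = W m)) as [l [Hl Hsub]].
  - intros V [->|[m ->]]; auto.
  - intros x Kx. destruct (Hcov x Kx) as [Ux|[m Wx]]; [exists U|exists (W m)]; eauto.
  - assert (Hbound : exists m, forall V, In V l -> forall y, V y -> U y \/ W m y).
    { clear Hsub. induction l as [|V l IH].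
      - exists 0. intros V [].
      - destruct IH as [m IH]; [intros V' HV'; apply Hl; right; exact HV'|].
        destruct (Hl V (or_introl eq_refl)) as [->|[m' ->]].
        + exists m. intros V' [<-|HV'] y Vy; [left; exact Vy|exact (IH V' HV' y Vy)].
        + exists (max m m'). intros V' [<-|HV'] y Vy.
          * right. apply (Hmono m'); [lia|exact Vy].
          * destruct (IH V' HV' y Vy) as [Uy|Wy]; [auto|].
            right. apply (Hmono m); [lia|exact Wy]. }
    destruct Hbound as [m Hm]. exists m. intros x Kx.
    destruct (Hsub x Kx) as [V [HVl Vx]]. exact (Hm V HVl x Vx).
Qed.

(* In a compact subspace T of G, a point with countable pseudocharacter has
   countable character: shrinking the sequence P by regularity to R n, the
   finite intersections of the R n form a local base of t in T. *)
Lemma pseudo_to_char (T : G -> Prop) (t : G) (P : nat -> G -> Prop) :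
  compact T -> (forall n, is_open G (P n) /\ P n t) ->
  (forall z, T z -> (forall n, P n z) -> z = t) -> countable_character T t.
Proof.
  intros HT HP Hpseudo.
  destruct (regular_seq t P HP) as [R [Q [HR [HQ [Rt [HQc Hdisj]]]]]].
  exists (fun m y => forall k, k <= m -> R k y). split.
  - intro m. split; [apply open_finite_inter; exact HR|intros k _; apply Rt].
  - intros U HU Ut.
    destruct (increasing_cover_bound T U (fun m y => exists k, k <= m /\ Q k y) HT HU)
      as [m Hm].
    + intro m. apply open_local. intros y [k [Hk Qky]].
      exists (Q k). split; [apply HQ|split; [exact Qky|]].
      intros y' Qy'. exists k; auto.
    + intros m m' y Hmm' [k [Hk Qky]]. exists k. split; [lia|exact Qky].
    + intros z Tz. destruct (classic (U z)) as [Uz|nUz]; [left; exact Uz|right].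
      assert (Hn : ~ forall n, P n z) by (intro Hz; apply nUz; rewrite (Hpseudo z Tz Hz); exact Ut).
      apply not_all_ex_not in Hn. destruct Hn as [n Hn].
      exists n, n. split; [lia|exact (HQc n z Hn)].
    + exists m. intros x Tx Bx.
      destruct (Hm x Tx) as [Ux|[k [Hk Qkx]]]; [exact Ux|].
      exfalso. exact (Hdisj k x (Bx k Hk) Qkx).
Qed.

Lemma closed_outside_all (Q : nat -> G -> Prop) :
  (forall n, is_open G (Q n)) -> is_closed (fun z => forall n, ~ Q n z).
Proof.
  intros HQ. unfold is_closed.
  apply (open_ext (fun x => exists n, Q n x)); [|apply open_seq_union; exact HQ].
  intro x. split; [intros [n Qx] H; exact (H n Qx)|].
  intro H. apply not_all_not_ex. exact H.
Qed.

Definition rtranslate (S : G -> Prop) (t : G) : G -> Prop :=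
  fun y => exists x, S x /\ y = mul G x t.

Definition ltranslate (s : G) (Z : G -> Prop) : G -> Prop :=
  fun y => exists z, Z z /\ y = mul G s z.

Lemma countable_base_trace (HT1 : @T1 G) (T C : G -> Prop) (t : G) :
  compact T -> countable_character C t ->
  exists (R : nat -> G -> Prop) (Z : G -> Prop),
    (forall n, is_open G (R n) /\ R n t) /\ compact Z /\ (forall z, Z z -> T z) /\
    (forall z, T z -> (forall n, R n z) -> Z z) /\ (forall z, Z z -> C z -> z = t).
Proof.
  intros HT [V [HV Hbase]].
  destruct (regular_seq t V HV) as [R [Q [HR [HQ [Rt [HQc Hdisj]]]]]].
  exists R, (fun z => T z /\ forall n, ~ Q n z). split; [|split; [|split; [|split]]].
  - intro n. split; [apply HR|apply Rt].
  - apply compact_inter; [exact HT|apply closed_outside_all; exact HQ].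
  - intros z [Tz _]; exact Tz.
  - intros z Tz HRz. split; [exact Tz|]. intros n Qz. exact (Hdisj n z (HRz n) Qz).
  - intros z [Tz HnQ] Cz. apply NNPP; intro Hzt.
    destruct (HT1 t z (fun E => Hzt (eq_sym E))) as [W [HW [Wt Wz]]].
    destruct (Hbase W HW Wt) as [n Hn]. apply Wz, Hn; [exact Cz|].
    apply NNPP; intro nV. exact (HnQ n (HQc n z nV)).
Qed.

Lemma separate_off_point (Hhn : @hereditarily_normal G) (A B : G -> Prop) (p : G) :
  is_closed A -> is_closed B -> (forall y, A y -> B y -> y = p) ->
  exists U V, is_open G U /\ is_open G V /\
    (forall y, y <> p -> A y -> U y) /\ (forall y, y <> p -> B y -> V y) /\
    (forall y, y <> p -> U y -> V y -> False).
Proof.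
  intros HA HB HAB. apply (Hhn (fun y => y <> p) A B HA HB).
  intros y Hyp Ay By. exact (Hyp (HAB y Ay By)).
Qed.

Lemma translate_nbhd_avoiding (HT1 : @T1 G) (U : G -> Prop) (x t p : G) :
  is_open G U -> U (mul G x t) -> mul G x t <> p ->
  exists O, is_open G O /\ O t /\ forall z, O z -> U (mul G x z) /\ mul G x z <> p.
Proof.
  intros HU Uxt Hxtp.
  destruct (cont_lmul x U t HU Uxt) as [B [HB [Bt HBU]]].
  exists (fun z => B z /\ z <> mul G (inv G x) p).
  split; [apply open_minus; auto|split].
  - split; [exact Bt|]. intros Et. apply Hxtp.
    rewrite Et, mulA, mulgV, mul1g. reflexivity.
  - intros z [Bz Hz]. split; [exact (HBU z Bz)|]. intros Exz. apply Hz.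
    rewrite <- Exz, mulA, mulVg, mul1g. reflexivity.
Qed.

Lemma dense_translate_nbhds (HT1 : @T1 G) (d : nat -> option G) (S U : G -> Prop)
  (s t : G) :
  (forall n x, d n = Some x -> S x) -> is_open G U ->
  (forall y, y <> mul G s t -> rtranslate S t y -> U y) ->
  exists O : nat -> G -> Prop, (forall n, is_open G (O n) /\ O n t) /\
    forall n x z, d n = Some x -> x <> s -> O n z ->
      U (mul G x z) /\ mul G x z <> mul G s t.
Proof.
  intros Hd HU HSU.
  assert (Hex : forall n, exists O, is_open G O /\ O t /\
    forall x z, d n = Some x -> x <> s -> O z -> U (mul G x z) /\ mul G x z <> mul G s t).
  { intro n. destruct (d n) as [x|] eqn:Ex.
    - destruct (classic (x = s)) as [->|Hxs].
      + exists (fun _ => True). split; [apply open_full|split; [exact I|]].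
        intros x' z Ex' Hx's. injection Ex' as <-. contradiction.
      + assert (Hxtp : mul G x t <> mul G s t) by (intro E; exact (Hxs (mul_cancel_r t x s E))).
        destruct (translate_nbhd_avoiding HT1 U x t (mul G s t) HU) as [O [HO [Ot HOU]]].
        * apply HSU; [exact Hxtp|exists x; split; [exact (Hd n x Ex)|reflexivity]].
        * exact Hxtp.
        * exists O. split; [exact HO|split; [exact Ot|]].
          intros x' z Ex' _ Oz. injection Ex' as <-. exact (HOU z Oz).
    - exists (fun _ => True). split; [apply open_full|split; [exact I|]].
      intros x' z Ex'. discriminate. }
  destruct (functional_choice _ Hex) as [O HO].
  exists O. split; [intro n; split; apply (HO n)|intros n; apply (HO n)].
Qed.

Lemma section_char_pseudochar (HT1 : @T1 G) (Hhn : @hereditarily_normal G)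
  (S T : G -> Prop) (s t : G) :
  compact S -> compact T -> separable S -> limit_point S s ->
  countable_character (fun c => T c /\ rtranslate S t (mul G s c)) t ->
  exists P : nat -> G -> Prop, (forall n, is_open G (P n) /\ P n t) /\
    (forall z, T z -> (forall n, P n z) -> z = t).
Proof.
  intros HS HT [d [Hd Hdense]] [Ss Hslim] Hchar.
  destruct (countable_base_trace HT1 T _ t HT Hchar) as [R [Z [HR [HZ [HZT [HRZ HZC]]]]]].
  assert (HStc : is_closed (rtranslate S t))
    by exact (compact_closed HT1 _ (compact_image _ S (cont_rmul t) HS)).
  assert (HsZc : is_closed (ltranslate s Z))
    by exact (compact_closed HT1 _ (compact_image _ Z (cont_lmul s) HZ)).
  destruct (separate_off_point Hhn _ _ (mul G s t) HStc HsZc)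
    as [U0 [V0 [HU0 [HV0 [HStU [HsZV HUV]]]]]].
  { intros y [x [Sx Ey]] [z [Zz Ez]].
    assert (Ezt : z = t).
    { apply HZC; [exact Zz|]. split; [exact (HZT z Zz)|].
      exists x. split; [exact Sx|congruence]. }
    congruence. }
  destruct (dense_translate_nbhds HT1 d S U0 s t Hd HU0 HStU) as [O [HO HOU]].
  exists (fun n y => R n y /\ O n y). split.
  - intro n. destruct (HR n) as [HRn Rt]. destruct (HO n) as [HOn Ot].
    split; [apply open_inter; auto|auto].
  - intros z Tz Hz. apply NNPP; intro Hzt.
    assert (Hszp : mul G s z <> mul G s t) by (intro E; exact (Hzt (mul_cancel_l s z t E))).
    assert (Vsz : V0 (mul G s z)).
    { apply HsZV; [exact Hszp|]. exists z. split; [|reflexivity].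
      apply HRZ; [exact Tz|intro n; apply (Hz n)]. }
    destruct (mul_cont G V0 s z HV0 Vsz) as [A [B [HA [HB [As [Bz HAB]]]]]].
    destruct (Hslim A HA As) as [x [Sx [Ax Hxs]]].
    destruct (Hdense (fun y => A y /\ y <> s)) as [n [x' [Ex' [Ax' Hx's]]]].
    + apply open_minus; assumption.
    + exists x; auto.
    + destruct (HOU n x' z Ex' Hx's (proj2 (Hz n))) as [Ux'z Hx'zp].
      exact (HUV _ Hx'zp Ux'z (HAB _ _ Ax' Bz)).
Qed.

End TopGroupFacts.

Theorem lemma2p7 (G : TopGroup) (HT1 : @T1 G) (Hhn : @hereditarily_normal G)
  (S T : G -> Prop) (s t : G)
  (HS : compact S) (HT : compact T) (Hsep : separable S)
  (Hs : limit_point S s) (Ht : uncountable_character T t) :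
  exists C : G -> Prop,
    (forall x, C x -> T x) /\ compact C /\ C t /\
    uncountable_character C t /\
    (forall c, C c -> exists x, S x /\ mul G s c = mul G x t).
Proof.
  destruct Ht as [Tt Hnc].
  pose (C := fun c => T c /\ rtranslate S t (mul G s c)).
  assert (Ct : C t) by (split; [exact Tt|exists s; split; [apply Hs|reflexivity]]).
  assert (HStc : is_closed (rtranslate S t))
    by exact (compact_closed HT1 _ (compact_image _ S (cont_rmul t) HS)).
  exists C. split; [intros x [Tx _]; exact Tx|]. split.
  - (* C is the trace on T of the preimage of the closed set S t *)
    apply compact_inter; [exact HT|].
    apply (cont_preimage _ (fun y => ~ rtranslate S t y)); [apply cont_lmul|exact HStc].
  - split; [exact Ct|]. split; [split; [exact Ct|]|intros c [_ Hc]; exact Hc].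
    intro Hchar. apply Hnc.
    destruct (section_char_pseudochar HT1 Hhn S T s t HS HT Hsep Hs Hchar)
      as [P [HP Hpseudo]].
    exact (pseudo_to_char T t P HT HP Hpseudo).
Qed.
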